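(* Let $\mathcal{C}$ be a $\beta$-avoiding simplicial complex. Then its Alexander dual $\mathcal{C}^*$ is also $\beta$-avoiding.
   Context: A simplicial complex on a finite ground set $V$ is a family of subsets of $V$ closed under subsets; isomorphism means a bijection of ground sets carrying faces onto faces. The Alexander dual is $\mathcal{C}^*=\{S\subseteq V: V\setminus S\notin\mathcal{C}\}$. For $S\subseteq V$, $\mathcal{C}\setminus S$ is the induced subcomplex $\{F\in\mathcal{C}:F\cap S=\emptyset\}$ on $V\setminus S$; for a face $R$, $\operatorname{link}_R(\mathcal{C})=\{F\setminus R: R\subseteq F\in\mathcal{C}\}$ on $V\setminus R$. A minor of $\mathcal{C}$ is $\operatorname{link}_R(\mathcal{C}\setminus S)$ with $S\cap R=\emptyset$ and $R$ a face of $\mathcal{C}$. $\mathcal{C}$ is $\beta$-avoiding if no minor is isomorphic to any of: $P_4$ (on $\{1,2,3,4\}$, facets $12,23,34$); $O_6$ (on $\{1,\dots,6\}$, faces the subsets containing none of $\{1,2\},\{3,4\},\{5,6\}$) or $O_6^*$; $J_1$ (on $\{1,\dots,5\}$, facets $12,15,234,345$) or $J_1^*$ (facets $134,235,245$); $J_2$ (on $\{1,\dots,5\}$, facets $12,235,34,145$); $\partial\Delta_n\sqcup\{v\}$ for $n\ge1$ (all proper subsets of an $(n+1)$-set, together with one extra isolated vertex $v$). *)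

From mathcomp Require Import all_boot.
Set Implicit Arguments. Unset Strict Implicit. Unset Printing Implicit Defensive.

(* A (candidate) simplicial complex inside an ambient finite type V:
   a ground set [gr] (the vertex set V of the paper) and a family of faces. *)
Record cplx (V : finType) := Cplx { gr : {set V}; fc : {set {set V}} }.

Definition is_complex (V : finType) (K : cplx V) : Prop :=
  (forall A, A \in fc K -> A \subset gr K) /\
  (forall A B : {set V}, B \in fc K -> A \subset B -> A \in fc K).

Definition adual (V : finType) (K : cplx V) : cplx V :=
  Cplx (gr K) [set S : {set V} | (S \subset gr K) && (gr K :\: S \notin fc K)].

Definition cdel (V : finType) (K : cplx V) (S : {set V}) : cplx V :=
  Cplx (gr K :\: S) [set A in fc K | [disjoint A & S]].

Definition clink (V : finType) (K : cplx V) (R : {set V}) : cplx V :=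
  Cplx (gr K :\: R) [set A :\: R | A in fc K & R \subset A].

Definition ciso (V W : finType) (K : cplx V) (L : cplx W) : Prop :=
  exists f : V -> W,
    [/\ {in gr K &, injective f}, f @: gr K = gr L &
        forall A : {set V}, A \subset gr K -> (A \in fc K) = (f @: A \in fc L)].

Definition gen_cplx (k : nat) (facets : seq {set 'I_k}) : cplx 'I_k :=
  Cplx [set: 'I_k] [set A : {set 'I_k} | has (fun F : {set 'I_k} => A \subset F) facets].

Definition vs (k : nat) (l : seq nat) : {set 'I_k.+1} := [set x : 'I_k.+1 | x \in map inord l].

(* Vertices 1..n of the paper are 0..n-1 here. *)
Definition P4 : cplx 'I_4 := gen_cplx [:: vs 3 [:: 0; 1]; vs 3 [:: 1; 2]; vs 3 [:: 2; 3]].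

Definition O6 : cplx 'I_6 :=
  Cplx [set: 'I_6]
    [set A : {set 'I_6} | ~~ (vs 5 [:: 0; 1] \subset A) && ~~ (vs 5 [:: 2; 3] \subset A)
                          && ~~ (vs 5 [:: 4; 5] \subset A)].

Definition O6d : cplx 'I_6 := adual O6.

Definition J1 : cplx 'I_5 :=
  gen_cplx [:: vs 4 [:: 0; 1]; vs 4 [:: 0; 4]; vs 4 [:: 1; 2; 3]; vs 4 [:: 2; 3; 4]].

Definition J1d : cplx 'I_5 :=
  gen_cplx [:: vs 4 [:: 0; 2; 3]; vs 4 [:: 1; 2; 4]; vs 4 [:: 1; 3; 4]].

Definition J2 : cplx 'I_5 :=
  gen_cplx [:: vs 4 [:: 0; 1]; vs 4 [:: 1; 2; 4]; vs 4 [:: 2; 3]; vs 4 [:: 0; 3; 4]].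

(* boundary of Delta_n (on vertices 0..n) plus isolated vertex n+1, on 'I_(n+2). *)
Definition bdry_plus (n : nat) : cplx 'I_n.+2 :=
  Cplx [set: 'I_n.+2]
    [set A : {set 'I_n.+2} |
       ((A \subset [set i : 'I_n.+2 | i <= n]) && (A != [set i : 'I_n.+2 | i <= n]))
       || (A == [set ord_max])].

Definition forbidden (V : finType) (K : cplx V) : Prop :=
  ciso K P4 \/ ciso K O6 \/ ciso K O6d \/ ciso K J1 \/
  ciso K J1d \/ ciso K J2 \/ (exists n, (1 <= n)%N /\ ciso K (bdry_plus n)).

Definition beta_avoiding (V : finType) (K : cplx V) : Prop :=
  forall S R : {set V}, S \subset gr K -> R \in fc K -> [disjoint S & R] ->
    ~ forbidden (clink (cdel K S) R).

(* For a face R of C^* and S disjoint from it, the minor link_R (C^* \ S) has the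
   same faces as the dual of the minor link_S (C \ R): in both, B is a face iff
   V \ (B u R) is not a face of C.  So when S is a face of C, a forbidden minor of
   C^* is the dual of a minor of C, and the forbidden family is closed under
   Alexander duality up to isomorphism: P4, J2 and the boundary-plus-vertex complexes
   are self-dual, while O6 and J1 are exchanged with their duals.  When S is not a
   face of C, that minor of C^* has its whole ground set as a face, which no
   forbidden complex has. *)

From mathcomp Require Import all_boot.
Set Implicit Arguments. Unset Strict Implicit. Unset Printing Implicit Defensive.

Ltac pointwise_hyps x := repeat match goal with
  | H : is_true [disjoint _ & _] |- _ =>
      move: (disjoint_setI0 H) => /setP /(_ x); rewrite in_set0 => /negbT; clear H
  | H : is_true (_ \subset _) |- _ => move: (subsetP H x) => /implyP; clear H
  end.

Ltac bool_cases :=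
  repeat match goal with |- context [?y \in ?A] => case: (y \in A) end; by [].

Ltac set_tauto := let x := fresh "x" in
  first [ apply/setP => x
        | apply/subsetP => x
        | rewrite -setI_eq0; apply/eqP/setP => x ];
  pointwise_hyps x; rewrite /= ?inE; bool_cases.

Definition cplx_eq (V : finType) (K L : cplx V) : Prop :=
  gr K = gr L /\ forall A : {set V}, A \subset gr K -> (A \in fc K) = (A \in fc L).

Lemma cplx_eq_sym (V : finType) (K L : cplx V) : cplx_eq K L -> cplx_eq L K.
Proof. by move=> [eKL fKL]; split=> // A; rewrite -eKL => /fKL ->. Qed.

Lemma adual_mem (V : finType) (K : cplx V) (A : {set V}) :
  (A \in fc (adual K)) = (A \subset gr K) && (gr K :\: A \notin fc K).
Proof. by rewrite inE. Qed.

Lemma adualK (V : finType) (K : cplx V) : cplx_eq K (adual (adual K)).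
Proof.
split=> // A AK; rewrite !adual_mem /= subsetDl AK /= negbK.
by have -> : gr K :\: (gr K :\: A) = A by set_tauto.
Qed.

Lemma ciso_cplx_eq (V : finType) (K L : cplx V) : cplx_eq K L -> ciso K L.
Proof.
by move=> [eKL fKL]; exists id; split=> [x y _ _||A /fKL]; rewrite ?imset_id.
Qed.

Lemma ciso_trans (V W U : finType) (K : cplx V) (L : cplx W) (M : cplx U) :
  ciso K L -> ciso L M -> ciso K M.
Proof.
move=> [f [fi fK ff]] [g [gi gL gf]]; exists (g \o f); split.
- move=> x y xK yK /gi fxy; apply: fi => //; apply: fxy; rewrite -fK; exact: imset_f.
- by rewrite imset_comp fK.
- move=> A AK; have fA : f @: A \subset gr L by rewrite -fK; exact: imsetS.
  by rewrite ff // gf // imset_comp.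
Qed.

Lemma imsetD_in (V W : finType) (f : V -> W) (G A : {set V}) :
  {in G &, injective f} -> A \subset G -> f @: (G :\: A) = f @: G :\: f @: A.
Proof.
move=> fi AG; apply/setP => y; rewrite inE; apply/imsetP/andP.
  move=> [x /setDP [xG xA] ->]; split; last exact: imset_f.
  apply/imsetP => [[z zA /fi]]; move/subsetP/(_ z zA): AG => zG /(_ xG zG) xz.
  by move: xA; rewrite xz zA.
move=> [yA /imsetP [x xG yx]]; exists x => //; rewrite inE xG andbT.
by move: yA; rewrite yx; apply: contra => xA; exact: imset_f.
Qed.

Lemma ciso_adual (V W : finType) (K : cplx V) (L : cplx W) :
  ciso K L -> ciso (adual K) (adual L).
Proof.
move=> [f [fi fK ff]]; exists f; split => // A /= AK.
by rewrite !adual_mem AK -fK imsetS //= -imsetD_in // ff // subsetDl.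
Qed.

Lemma ciso_full_face (V W : finType) (K : cplx V) (L : cplx W) :
  ciso K L -> (gr K \in fc K) = (gr L \in fc L).
Proof. by move=> [f [_ fK ff]]; rewrite ff // fK. Qed.

Section DualMinor.
Variables (V : finType) (K : cplx V) (S R : {set V}).
Hypotheses (SK : S \subset gr K) (RK : R \subset gr K) (SR : [disjoint S & R]).

Lemma clink_cdel_adual_mem (B : {set V}) : B \subset gr K :\: S :\: R ->
  (B \in fc (clink (cdel (adual K) S) R)) = (gr K :\: (B :|: R) \notin fc K).
Proof.
move=> BSR; apply/imsetP/idP => [[A] | BRK].
  rewrite inE => /andP [+ RA] ->; rewrite inE adual_mem => /andP [/andP [AK AKK] AS].
  by have -> : A :\: R :|: R = A by set_tauto.
exists (B :|: R); last by set_tauto.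
rewrite inE /= inE adual_mem BRK andbT -!andbA; apply/and3P; split; set_tauto.
Qed.

Lemma adual_clink_cdel_mem (B : {set V}) : B \subset gr K :\: S :\: R ->
  (B \in fc (adual (clink (cdel K R) S))) = (gr K :\: (B :|: R) \notin fc K).
Proof.
move=> BSR; rewrite adual_mem /=.
have -> /= : B \subset gr K :\: R :\: S by set_tauto.
congr (~~ _); apply/imsetP/idP => [[A] | BRK].
  rewrite inE => /andP [+ SA] E; rewrite inE => /andP [AK AR].
  have -> : gr K :\: (B :|: R) = (gr K :\: R :\: S) :\: B :|: S by set_tauto.
  by rewrite E; have -> : A :\: S :|: S = A by set_tauto.
exists (gr K :\: (B :|: R)); last by set_tauto.
rewrite inE /= inE BRK /=; apply/andP; split; set_tauto.
Qed.

Lemma clink_cdel_adual :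
  cplx_eq (adual (clink (cdel K R) S)) (clink (cdel (adual K) S) R).
Proof.
split; first by rewrite /=; set_tauto.
move=> B BRS; have BSR : B \subset gr K :\: S :\: R by set_tauto.
by rewrite clink_cdel_adual_mem ?adual_clink_cdel_mem.
Qed.

Lemma clink_cdel_adual_full : S \notin fc K ->
  gr (clink (cdel (adual K) S) R) \in fc (clink (cdel (adual K) S) R).
Proof.
move=> SnK; rewrite clink_cdel_adual_mem //=.
by have -> : gr K :\: (gr K :\: S :\: R :|: R) = S by set_tauto.
Qed.

End DualMinor.

Arguments inord : simpl never.

Lemma vs_subset k l (A : {set 'I_k.+1}) :
  (vs k l \subset A) = all (fun j => inord j \in A) l.
Proof.
apply/subsetP/allP => [lA j jl | lA x].
  by apply: lA; rewrite inE; apply/mapP; exists j.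
by rewrite inE => /mapP [j jl ->]; apply: lA.
Qed.

Lemma subset_vs k l (A : {set 'I_k.+1}) : all (fun j => j <= k) l ->
  (A \subset vs k l) = all (fun j => (j \in l) || (inord j \notin A)) (iota 0 k.+1).
Proof.
move=> /allP lk; apply/subsetP/allP => [Al j | Al x xA].
  rewrite mem_iota add0n => jk; apply/orP; case: (boolP (inord j \in A)); last by right.
  move=> /Al; rewrite inE => /mapP [i il ji]; left.
  by have := congr1 val ji; rewrite /= !inordK // ?ltnS ?lk // => ->.
have := Al (val x); rewrite mem_iota add0n ltn_ord inord_val xA orbF => /(_ isT) xl.
by rewrite inE; apply/mapP; exists (val x) => //; rewrite inord_val.
Qed.

Lemma mem_imset_involutive (T : finType) (f : T -> T) (A : {set T}) y :
  involutive f -> (y \in f @: A) = (f y \in A).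
Proof.
move=> fK; apply/imsetP/idP => [[x xA ->] | fyA]; first by rewrite fK.
by exists (f y); rewrite ?fK.
Qed.

Lemma ciso_involutive k (K L : cplx 'I_k) (f : 'I_k -> 'I_k) :
  gr K = setT -> gr L = setT -> involutive f ->
  (forall A, (A \in fc K) = (f @: A \in fc L)) -> ciso K L.
Proof.
move=> KT LT fK ff; exists f; split => //; first by move=> x y _ _; apply: inv_inj.
by rewrite KT LT; apply/setP => y; rewrite mem_imset_involutive // !inE.
Qed.

(* The map [i |-> l_i] on ['I_n.+1]; out-of-range values are truncated by [inord]. *)
Definition ord_of_seq n (l : seq nat) (x : 'I_n.+1) : 'I_n.+1 := inord (nth 0 l x).
Arguments ord_of_seq : simpl never.

Lemma ord_of_seq_inord n l j : j <= n -> @ord_of_seq n l (inord j) = inord (nth 0 l j).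
Proof. by move=> jn; rewrite /ord_of_seq inordK. Qed.

Lemma ord_of_seq_involutive n l :
  all (fun j => (nth 0 l j <= n) && (nth 0 l (nth 0 l j) == j)) (iota 0 n.+1) ->
  involutive (@ord_of_seq n l).
Proof.
move=> /allP ll x; apply/val_inj; rewrite /ord_of_seq.
have /andP [lxn /eqP llx] : (nth 0 l x <= n) && (nth 0 l (nth 0 l x) == x).
  by apply: ll; rewrite mem_iota add0n ltn_ord.
by rewrite inordK ?ltnS // llx inord_val.
Qed.

Ltac ciso_by_involution n l :=
  let fK := fresh "fK" in let A := fresh "A" in
  have fK := @ord_of_seq_involutive n l isT;
  apply: (ciso_involutive _ _ fK) => // A;
  rewrite ?adual_mem /= ?subsetT !inE /= ?subsetT /= ?vs_subset ?subset_vs //=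
    !(mem_imset_involutive _ _ fK) !ord_of_seq_inord //= !inE /=;
  bool_cases.

Lemma adual_P4 : ciso (adual P4) P4.
Proof. ciso_by_involution 3 [:: 3; 1; 2; 0]. Qed.

Lemma adual_J1 : ciso (adual J1) J1d.
Proof. ciso_by_involution 4 [:: 0; 1; 2; 3; 4]. Qed.

Lemma adual_J1d : ciso (adual J1d) J1.
Proof. ciso_by_involution 4 [:: 0; 1; 2; 3; 4]. Qed.

Lemma adual_J2 : ciso (adual J2) J2.
Proof. ciso_by_involution 4 [:: 1; 0; 2; 3; 4]. Qed.

Lemma adual_O6d : ciso (adual O6d) O6.
Proof. exact/ciso_cplx_eq/cplx_eq_sym/adualK. Qed.

Lemma bdry_plus_base n : [set i : 'I_n.+2 | i <= n] = ~: [set ord_max].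
Proof.
apply/setP => i; rewrite !inE -val_eqE /= -ltnS.
by rewrite ltn_neqAle -ltnS ltn_ord andbT.
Qed.

Lemma adual_bdry_plus n : ciso (adual (bdry_plus n)) (bdry_plus n).
Proof.
apply: (@ciso_involutive _ _ _ id) => // A.
rewrite imset_id adual_mem /= subsetT !inE bdry_plus_base setTD.
set m := @ord_max n.+1.
have subC1 (B : {set 'I_n.+2}) : (B \subset ~: [set m]) = (m \notin B).
  by rewrite subsetC sub1set in_setC.
rewrite !subC1 in_setC negbK (inj_eq (@setC_inj _)) -[~: A == _](inj_eq (@setC_inj _)) setCK.
have m1C : [set m] != ~: [set m] by apply/eqP => /setP /(_ m); rewrite !inE eqxx.
case: (eqVneq A [set m]) => [-> | Am]; first by rewrite set11 (negbTE m1C) orbT.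
case: (eqVneq A (~: [set m])) => [-> | AmC]; first by rewrite !inE eqxx.
by rewrite !andbT !orbF.
Qed.

Lemma forbidden_ciso (V W : finType) (K : cplx V) (L : cplx W) :
  ciso K L -> forbidden L -> forbidden K.
Proof.
move=> /ciso_trans KL.
case=> [/KL|[/KL|[/KL|[/KL|[/KL|[/KL|[n [n1 /KL]]]]]]]] h; rewrite /forbidden.
all: by [tauto | do 6 right; exists n].
Qed.

Lemma forbidden_adual (V : finType) (K : cplx V) : forbidden K -> forbidden (adual K).
Proof.
case=> [|[|[|[|[|[|[n [n1]]]]]]]] /ciso_adual h; rewrite /forbidden.
- have := ciso_trans h adual_P4; tauto.
- tauto.
- have := ciso_trans h adual_O6d; tauto.
- have := ciso_trans h adual_J1; tauto.
- have := ciso_trans h adual_J1d; tauto.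
- have := ciso_trans h adual_J2; tauto.
- have := ciso_trans h (adual_bdry_plus n); do 6 right; by exists n.
Qed.

Lemma forbidden_not_full (V : finType) (K : cplx V) : forbidden K -> gr K \notin fc K.
Proof.
case=> [|[|[|[|[|[|[n [_]]]]]]]] /ciso_full_face ->.
- by rewrite /= !inE /= !subset_vs //= !inE.
- by rewrite /= !inE !subsetT.
- by rewrite adual_mem /= subsetT setDv /= inE !vs_subset /= !inE.
- by rewrite /= !inE /= !subset_vs //= !inE.
- by rewrite /= !inE /= !subset_vs //= !inE.
- by rewrite /= !inE /= !subset_vs //= !inE.
- rewrite /= inE bdry_plus_base; apply/negP => /orP [/andP [/subsetP sub _] | /eqP /setP full].
    by move: (sub ord_max (in_setT _)); rewrite !inE eqxx.
  by move: (full ord0); rewrite !inE -val_eqE.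
Qed.

Unset Implicit Arguments.

Theorem proposition4p3 (V : finType) (K : cplx V) :
  is_complex K -> beta_avoiding K -> beta_avoiding (adual K).
Proof.
move=> _ Kbeta S R /= SK; rewrite adual_mem => /andP [RK _] SR minor_forbidden.
have [SfK | SnK] := boolP (S \in fc K).
  apply: (Kbeta R S RK SfK); first by rewrite disjoint_sym.
  apply: (forbidden_ciso (ciso_cplx_eq (adualK _))); apply: forbidden_adual.
  exact: forbidden_ciso (ciso_cplx_eq (clink_cdel_adual SK RK SR)) minor_forbidden.
by have := forbidden_not_full minor_forbidden; rewrite clink_cdel_adual_full.
Qed.
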